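(* Let $f:\mathbb{R}^n\to\mathbb{R}\cup\{+\infty\}$ be closed and convex, let $X\in\mathbb{R}^{n\times m}$ have rank $r$ with compact SVD $X=U_r\Sigma_r V_r^\top$, let $\gamma>0$ and $\lambda>0$. Define $$p_{\rm pen}(\lambda)=\min_{w\in\mathbb{R}^m}\ f(Xw)+\tfrac{\gamma}{2}\|w\|_2^2+\lambda\|w\|_0,$$ $$p^{**}_{\rm pen}(\lambda)=\min_{v\in\mathbb{R}^m,\ u\in[0,1]^m}\ f(XD(u)v)+\tfrac{\gamma}{2}v^\top D(u)v+\lambda\mathbf 1^\top u .$$ Let $(v^*,u^* )$ be an optimal solution of the latter problem with optimal value $t^*$, let $z^*=\Sigma_rV_r^\top D(u^* )v^*$, let $\ell_i$ be the $i$-th column of $\Sigma_rV_r^\top$, and let $c\sim\mathcal N(0,I_m)$. Consider the linear program in $u\in\mathbb{R}^m$: $$\min\ c^\top u\quad\text{s.t.}\quad f(U_rz^* )+\sum_{i=1}^m\Big(u_i\tfrac{\gamma}{2}(v_i^* )^2+\lambda u_i\Big)=t^*,\quad \sum_{i=1}^m u_i\ell_i v_i^*=z^*,\quad u\in[0,1]^m.$$ Then, with probability one, from an optimal basic feasible solution $\bar u$ of this linear program one can construct a primal feasible point (namely, with $S=\{i:\bar u_i\notin\{0,1\}\}$, $\tilde u_i=1,\tilde v_i=\bar u_iv_i^*$ for $i\in S$, $\tilde u_i=\bar u_i,\tilde v_i=v_i^*$ for $i\notin S$, and $w=D(\tilde u)\tilde v$) whose objective value $\mathrm{OPT}=f(Xw)+\tfrac{\gamma}{2}\|w\|_2^2+\lambda\mathbf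 1^\top\tilde u$ satisfies $$p^{**}_{\rm pen}(\lambda)\le p_{\rm pen}(\lambda)\le \mathrm{OPT}\le p^{**}_{\rm pen}(\lambda)+\lambda(r+1).$$
   Context: $\|w\|_0$ denotes the number of nonzero entries of $w$; $D(u)=\mathrm{diag}(u_1,\dots,u_m)$; $\mathbf 1$ is the all-ones vector. A function is closed if it is lower semicontinuous. Note $p_{\rm pen}(\lambda)=\min_{v\in\mathbb{R}^m,u\in\{0,1\}^m} f(XD(u)v)+\tfrac{\gamma}{2}v^\top D(u)v+\lambda\mathbf 1^\top u$. *)

From HB Require Import structures.
From mathcomp Require Import all_boot all_order all_algebra.
From mathcomp Require Import all_classical all_reals all_analysis.
From mathcomp Require Import normal_distribution.
Set Implicit Arguments. Unset Strict Implicit. Unset Printing Implicit Defensive.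
Import Order.TTheory GRing.Theory Num.Theory.
Import numFieldNormedType.Exports.
Local Open Scope classical_set_scope.
Local Open Scope ring_scope.

Section Defs.
Context {R : realType}.

Definition l0norm m (w : 'cV[R]_m) : nat := #|[set i | w i 0 != 0]|.
Definition sqnorm m (w : 'cV[R]_m) : R := \sum_i w i 0 ^+ 2.
Definition Dm m (u : 'cV[R]_m) : 'M[R]_m := diag_mx u^T.
Definition in01 m (u : 'cV[R]_m) : Prop := forall i, 0 <= u i 0 <= 1.

Definition convex_ext n (f : 'cV[R]_n -> \bar R) : Prop :=
  forall (x y : 'cV[R]_n) (t : R), 0 < t < 1 ->
    (f (t *: x + (1 - t) *: y)%R <= t%:E * f x + (1 - t)%:E * f y)%E.

(* p_pen(lambda) (written min in the paper; stated as an infimum) *)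
Definition ppen n m (f : 'cV[R]_n -> \bar R) (X : 'M[R]_(n, m)) (gamma lambda : R)
  : \bar R :=
  ereal_inf [set (f (X *m w) + (gamma / 2 * sqnorm w + lambda * (l0norm w)%:R)%:E)%E
            | w in [set: 'cV[R]_m]].

Definition pstar n m (f : 'cV[R]_n -> \bar R) (X : 'M[R]_(n, m)) (gamma lambda : R)
  : \bar R :=
  ereal_inf [set t | exists (v u : 'cV[R]_m), in01 u /\
     t = (f (X *m (Dm u *m v)) +
          (gamma / 2 * (v^T *m Dm u *m v) 0 0 + lambda * \sum_i u i 0)%:E)%E].

Section LP.
Variables (n m r : nat) (f : 'cV[R]_n -> \bar R) (X : 'M[R]_(n, m))
  (U : 'M[R]_(n, r)) (s : 'rV[R]_r) (V : 'M[R]_(m, r))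
  (gamma lambda : R) (vstar ustar : 'cV[R]_m) (tstar : \bar R).

Definition SVt : 'M[R]_(r, m) := diag_mx s *m V^T.
Definition zstar : 'cV[R]_r := SVt *m (Dm ustar *m vstar).
Definition ell (i : 'I_m) : 'cV[R]_r := col i SVt.

Definition lp_feasible (u : 'cV[R]_m) : Prop :=
  [/\ (f (U *m zstar) +
        (\sum_i (u i 0 * (gamma / 2 * vstar i 0 ^+ 2) + lambda * u i 0))%:E
        = tstar)%E,
      \sum_i (u i 0 * vstar i 0) *: ell i = zstar
    & in01 u].

(* coefficient matrix of the r+1 equality constraints (rows = their normals) *)
Definition lp_eq_mx : 'M[R]_(1 + r, m) :=
  col_mx (\row_i (gamma / 2 * vstar i 0 ^+ 2 + lambda)) (SVt *m Dm vstar).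

(* normals of the active bound constraints (zero rows for inactive ones) *)
Definition lp_active_mx (u : 'cV[R]_m) : 'M[R]_m :=
  diag_mx (\row_i ((u i 0 == 0) || (u i 0 == 1))%:R).

(* basic feasible solution: feasible, and the active constraints contain
   m linearly independent ones *)
Definition lp_bfs (u : 'cV[R]_m) : Prop :=
  lp_feasible u /\ \rank (col_mx lp_eq_mx (lp_active_mx u)) = m.

Definition lp_opt_bfs (c u : 'cV[R]_m) : Prop :=
  lp_bfs u /\ forall u', lp_feasible u' -> (c^T *m u) 0 0 <= (c^T *m u') 0 0.

Definition fracS (ub : 'cV[R]_m) (i : 'I_m) : bool :=
  (ub i 0 != 0) && (ub i 0 != 1).
Definition utilde (ub : 'cV[R]_m) : 'cV[R]_m :=
  \col_i (if fracS ub i then 1 else ub i 0).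
Definition vtilde (ub : 'cV[R]_m) : 'cV[R]_m :=
  \col_i (if fracS ub i then ub i 0 * vstar i 0 else vstar i 0).
Definition wround (ub : 'cV[R]_m) : 'cV[R]_m := Dm (utilde ub) *m vtilde ub.
Definition OPT (ub : 'cV[R]_m) : \bar R :=
  (f (X *m wround ub) +
   (gamma / 2 * sqnorm (wround ub) + lambda * \sum_i utilde ub i 0)%:E)%E.

End LP.
End Defs.

(* The linear program lives in the box [0,1]^m cut by 1 + r equalities (the
   objective row and the rows of Sigma_r V_r^T D(v* )), and u* is feasible.
   Moving along a kernel direction that does not increase c^T u until a
   fractional coordinate reaches 0 or 1 shows that every feasible point is
   dominated by a basic feasible solution; a bfs is determined by its pattern
   of 0/1 coordinates, so an optimal bfs exists for every c. Hence the
   statement holds surely.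
   At a bfs the active bounds and the 1 + r equalities have rank m, so at most
   r + 1 coordinates of the bfs are fractional. The rounding keeps
   w = D(u_bar) v*, hence X w = U_r z*, and lowers the quadratic term since
   u_bar_i^2 <= u_bar_i; it raises the count sum_i u_i by at most r + 1, and the
   objective constraint turns this into OPT <= t* + lambda (r + 1). The lower
   bounds are the relaxation p** <= p_pen (take u the support of w) and the
   feasibility of the rounded w for p_pen. *)

From HB Require Import structures.
From mathcomp Require Import all_boot all_order all_algebra.
From mathcomp Require Import all_classical all_reals all_analysis.
From mathcomp Require Import normal_distribution.
From mathcomp Require Import lra ring zify.
Import Order.TTheory GRing.Theory Num.Theory.
Import numFieldNormedType.Exports.
Set Implicit Arguments. Unset Strict Implicit. Unset Printing Implicit Defensive.
Local Open Scope ring_scope.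

Section MatrixFacts.
Context {F : fieldType}.

Lemma kermx_nonzero p q (M : 'M[F]_(p, q)) :
  (\rank M < q)%N -> exists2 x : 'cV[F]_q, x != 0 & M *m x = 0.
Proof.
move=> rkM; have : kermx M^T != 0.
  by rewrite -mxrank_eq0 mxrank_ker mxrank_tr subn_eq0 -ltnNge.
case/rowV0Pn=> y /submxP[a ->] ya0; exists (a *m kermx M^T)^T.
  by rewrite trmx_eq0.
by apply: trmx_inj; rewrite trmx_mul trmxK trmx0 -mulmxA mulmx_ker mulmx0.
Qed.

Lemma mulmx_full_rank_eq0 p q (M : 'M[F]_(p, q)) (x : 'cV[F]_q) :
  \rank M = q -> M *m x = 0 -> x = 0.
Proof.
move=> rkM Mx0; have freeMt : row_free M^T by rewrite /row_free mxrank_tr rkM.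
by apply/eqP; rewrite -trmx_eq0 -(mulmx_free_eq0 _ freeMt) -trmx_mul Mx0 trmx0.
Qed.

Lemma mulmx_sum_col p q (A : 'M[F]_(p, q)) (w : 'cV[F]_q) :
  A *m w = \sum_i w i 0 *: col i A.
Proof.
apply/matrixP => a l; rewrite (ord1 l) !mxE summxE; apply: eq_bigr => i _.
by rewrite !mxE mulrC.
Qed.

Lemma mxrank_diag_le q (d : 'rV[F]_q) :
  (\rank (diag_mx d) <= #|[set i | d 0%R i != 0%R]|)%N.
Proof.
rewrite diag_mx_sum_delta (bigID (fun i => d 0 i != 0)) /=.
rewrite [X in _ + X]big1 => [|i /negPn/eqP ->]; last by rewrite scale0r.
rewrite addr0 -sum1dep_card; elim/big_ind2: _ => [|A a B b leA leB|i _].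
- by rewrite mxrank0.
- exact: leq_trans (mxrank_add _ _) (leq_add leA leB).
- by rewrite (leq_trans (mxrankS (scalemx_sub _ (submx_refl _)))) ?mxrank_delta.
Qed.

Lemma mxrank_col_mx_le p1 p2 q (A : 'M[F]_(p1, q)) (B : 'M[F]_(p2, q)) :
  (\rank (col_mx A B) <= \rank A + \rank B)%N.
Proof. by rewrite -addsmxE mxrank_adds_leqif. Qed.

Lemma mxrank_col_mx_full_ext p0 p1 p2 q (A0 : 'M[F]_(p0, q)) (A : 'M[F]_(p1, q))
    (B : 'M[F]_(p2, q)) :
  \rank (col_mx A B) = q -> \rank (col_mx (col_mx A0 A) B) = q.
Proof.
move=> rkAB; apply/eqP; rewrite eqn_leq rank_leq_col -{1}rkAB mxrankS //.
rewrite -!addsmxE addsmx_sub addsmxSr andbT.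
by apply: submx_trans (addsmxSl _ B); rewrite -addsmxE addsmxSr.
Qed.

End MatrixFacts.

Section BoxLP.
Context {R : realType} (m k : nat) (K : 'M[R]_(k, m)) (b : 'cV[R]_k).

Definition box_feasible (u : 'cV[R]_m) : Prop := in01 u /\ K *m u = b.

Definition box_bfs (u : 'cV[R]_m) : Prop :=
  box_feasible u /\ \rank (col_mx K (lp_active_mx u)) = m.

Definition active_pattern (u : 'cV[R]_m) : {ffun 'I_m -> bool * bool} :=
  [ffun i => (u i 0 == 0, u i 0 == 1)].

Lemma lp_active_mul_eq0 (u d : 'cV[R]_m) :
  lp_active_mx u *m d = 0 <-> forall i, ~~ fracS u i -> d i 0 = 0.
Proof.
have mulE i : (lp_active_mx u *m d) i 0 = (~~ fracS u i)%:R * d i 0.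
  by rewrite mul_diag_mx !mxE /fracS negb_and !negbK.
split=> [Ad0 i ai | dz].
  by move: (mulE i); rewrite Ad0 mxE ai mul1r => <-.
apply/matrixP => i l; rewrite (ord1 l) mulE mxE.
by have [fi|/dz ->] := boolP (fracS u i); rewrite ?fi ?mulr0 // mul0r.
Qed.

Lemma card_frac_le (u : 'cV[R]_m) :
  \rank (col_mx K (lp_active_mx u)) = m -> (#|[set i | fracS u i]| <= k)%N.
Proof.
move=> rkKA; have rkA : (\rank (lp_active_mx u) <= #|~: [set i | fracS u i]|)%N.
  apply: leq_trans (mxrank_diag_le _) _; apply: eq_leq; apply: eq_card => i.
  by rewrite !inE mxE pnatr_eq0 eqb0 negbK /fracS negb_and !negbK.
have := mxrank_col_mx_le K (lp_active_mx u); rewrite rkKA.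
have := rank_leq_row K; have := cardsC [set i | fracS u i]; rewrite card_ord.
lia.
Qed.

Variable c : 'cV[R]_m.
Local Notation cost u := ((c^T *m u) 0 0).

Lemma box_descent_dir (u : 'cV[R]_m) :
  (\rank (col_mx K (lp_active_mx u)) < m)%N ->
  exists d : 'cV[R]_m,
    [/\ d != 0, K *m d = 0, forall i, ~~ fracS u i -> d i 0 = 0 & cost d <= 0].
Proof.
case/kermx_nonzero => d dn0; rewrite mul_col_mx -col_mx0 => /eq_col_mx[Kd Ad].
have dfrac := proj1 (lp_active_mul_eq0 u d) Ad.
have [cd|cd] := lerP (cost d) 0; first by exists d.
exists (- d); split=> [||i /dfrac di|].
- by rewrite oppr_eq0.
- by rewrite mulmxN Kd oppr0.
- by rewrite mxE di oppr0.
- by rewrite mulmxN mxE oppr_le0 ltW.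
Qed.

(* The ratio test: walk along d until a first fractional coordinate hits a bound. *)
Lemma box_ratio_test (u d : 'cV[R]_m) :
  box_feasible u -> d != 0 -> K *m d = 0 -> (forall i, ~~ fracS u i -> d i 0 = 0) ->
  exists2 t, 0 <= t & box_feasible (u + t *: d) /\
    (#|[set i | fracS (u + t *: d) i]| < #|[set i | fracS u i]|)%N.
Proof.
move=> [u01 Ku] dn0 Kd dfrac.
have [j0 dj0] : exists j0, d j0 0 != 0.
  apply/existsP; apply: contraNT dn0 => /existsPn dz.
  by apply/eqP/matrixP => i l; rewrite (ord1 l) mxE; exact/eqP/negPn/dz.
pose step i := if 0 < d i 0 then (1 - u i 0) / d i 0 else - u i 0 / d i 0.
have step_ge0 i : 0 <= step i.
  have /andP[u0 u1] := u01 i; rewrite /step; case: ifPn => [dpos|].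
    by apply: divr_ge0; [rewrite subr_ge0 | exact: ltW].
  by rewrite -leNgt => dneg; rewrite mulr_le0 ?oppr_le0 ?invr_le0.
case: (@arg_minP _ _ _ j0 (fun i => d i 0 != 0) step dj0) => j dj jmin; set t := step j.
have t0 : 0 <= t := step_ge0 j.
have uE i : (u + t *: d) i 0 = u i 0 + t * d i 0 by rewrite !mxE.
exists t => //; split.
  split; last by rewrite mulmxDr -scalemxAr Kd scaler0 addr0.
  move=> i; rewrite uE; have /andP[u0 u1] := u01 i.
  have [->|di] := eqVneq (d i 0) 0; first by rewrite mulr0 addr0 u0 u1.
  have : t <= step i := jmin i di; rewrite /step; case: ifPn => [dpos|dneg].
    by rewrite ler_pdivlMr // => tdi; apply/andP; split; nra.
  have dlt : d i 0 < 0 by rewrite lt_neqAle di leNgt.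
  by rewrite ler_ndivlMr // => tdi; apply/andP; split; nra.
rewrite proper_card //; apply/properP; split.
  apply/fintype.subsetP => i; rewrite !inE; apply: contraLR => /[dup] nfi /dfrac di.
  by rewrite /fracS uE di mulr0 addr0.
exists j; rewrite inE; first by apply: contraR dj => /dfrac ->.
rewrite /fracS uE /t /step; case: ifP => dpos.
  by rewrite divfK // addrC subrK eqxx andbF.
by rewrite divfK // addrN eqxx.
Qed.

Lemma box_reduce_to_bfs (u : 'cV[R]_m) :
  box_feasible u -> exists2 v, box_bfs v & cost v <= cost u.
Proof.
have [N] := ubnP #|[set i | fracS u i]|; elim: N u => // N IH u ltuN feas_u.
have [full|notfull] := eqVneq (\rank (col_mx K (lp_active_mx u))) m.
  by exists u.
have rk_lt : (\rank (col_mx K (lp_active_mx u)) < m)%N.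
  by rewrite ltn_neqAle notfull rank_leq_col.
have [d [dn0 Kd dfrac cd]] := box_descent_dir rk_lt.
have [t t0 [feas_ut ltfrac]] := box_ratio_test feas_u dn0 Kd dfrac.
have [v bfs_v cv] := IH _ (leq_trans ltfrac ltuN) feas_ut.
exists v => //; apply: le_trans cv _.
have costD : cost (u + t *: d) = cost u + t * cost d.
  by rewrite mulmxDr -scalemxAr !mxE.
by rewrite costD gerDl mulr_ge0_le0.
Qed.

Lemma box_bfs_pattern_inj (u v : 'cV[R]_m) :
  box_bfs u -> box_feasible v -> active_pattern u = active_pattern v -> u = v.
Proof.
move=> [[_ Ku] rkKA] [_ Kv] /ffunP puv.
apply/eqP; rewrite -subr_eq0; apply/eqP; apply: (mulmx_full_rank_eq0 rkKA).
rewrite mul_col_mx mulmxBr Ku Kv subrr (proj2 (lp_active_mul_eq0 _ _)) ?col_mx0 //.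
move=> i; rewrite /fracS negb_and !negbK !mxE; have := puv i; rewrite !ffunE.
by case=> e0 e1 /orP[]/eqP ui; [move: e0 | move: e1];
  rewrite ui eqxx => /esym/eqP ->; rewrite subrr.
Qed.

(* A bfs is determined by its finitely many possible active patterns, so the
   cost has a minimum over bfs's, and every feasible point is beaten by one. *)
Lemma box_exists_opt_bfs (u0 : 'cV[R]_m) : box_feasible u0 ->
  exists u, box_bfs u /\ forall v, box_feasible v -> cost u <= cost v.
Proof.
move=> /box_reduce_to_bfs[u1 bfs1 _].
pose realized p := `[< exists u, box_bfs u /\ active_pattern u = p >].
pose pick p := xget 0 [set u | box_bfs u /\ active_pattern u = p].
have pickP p : realized p -> box_bfs (pick p) /\ active_pattern (pick p) = p.
  by move/asboolP; exact: xgetPex.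
have realized_bfs w : box_bfs w -> realized (active_pattern w).
  by move=> bfs_w; apply/asboolP; exists w.
case: (arg_minP (fun p => cost (pick p)) (realized_bfs _ bfs1)) => p rp pmin.
exists (pick p); split=> [|v /box_reduce_to_bfs[w bfs_w cw]]; first exact: (pickP p rp).1.
have [bfs_pw pat_pw] := pickP _ (realized_bfs _ bfs_w).
apply: le_trans (pmin _ (realized_bfs _ bfs_w)) _.
by rewrite (box_bfs_pattern_inj bfs_pw bfs_w.1 pat_pw).
Qed.

End BoxLP.

Section Relaxation.
Context {R : realType} (n m : nat) (f : 'cV[R]_n -> \bar R) (X : 'M[R]_(n, m))
  (gamma lambda : R).

Lemma DmE (u v : 'cV[R]_m) i : (Dm u *m v) i 0 = u i 0 * v i 0.
Proof. by rewrite mul_diag_mx !mxE. Qed.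

Lemma Dm_quadE (u v : 'cV[R]_m) :
  (v^T *m Dm u *m v) 0 0 = \sum_i u i 0 * v i 0 ^+ 2.
Proof. by rewrite -mulmxA mxE; apply: eq_bigr => i _; rewrite DmE !mxE; ring. Qed.

Lemma l0normE (w : 'cV[R]_m) : (l0norm w)%:R = \sum_i ((w i 0 != 0)%:R : R).
Proof.
rewrite /l0norm -sumr_const big_mkcond; apply: eq_bigr => i _.
have -> : (i \in [set j | w j 0 != 0]%classic) = (w i 0 != 0).
  by apply/idP/idP; rewrite in_setE.
by case: (w i 0 != 0).
Qed.

Lemma pstar_le_ppen : (pstar f X gamma lambda <= ppen f X gamma lambda)%E.
Proof.
apply: le_ereal_inf_tmp => _ [w _ <-]; apply: ereal_inf_lbound.
pose supp : 'cV[R]_m := \col_i (w i 0 != 0)%:R.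
have supp_w : Dm supp *m w = w.
  apply/matrixP => i l; rewrite (ord1 l) DmE mxE.
  by have [->|] := eqVneq (w i 0) 0; rewrite ?mulr0 ?mul1r.
exists w, supp; split.
  by move=> i; rewrite mxE; case: (w i 0 != 0); rewrite ?lexx ?ler01.
rewrite supp_w Dm_quadE l0normE /sqnorm; congr (_ + (_ * _ + _ * _)%:E)%E.
  apply: eq_bigr => i _; rewrite mxE.
  by have [->|] := eqVneq (w i 0) 0; rewrite ?mul1r // expr2 mulr0 mul0r.
by apply: eq_bigr => i _; rewrite mxE.
Qed.

Lemma ppen_le_binary (u v : 'cV[R]_m) : 0 <= lambda ->
  (forall i, u i 0 = 0 \/ u i 0 = 1) ->
  (ppen f X gamma lambda <= f (X *m (Dm u *m v)) +
     (gamma / 2 * sqnorm (Dm u *m v) + lambda * \sum_i u i 0)%:E)%E.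
Proof.
move=> lambda_ge0 u01; apply: le_trans (ereal_inf_lbound _) _.
  by exists (Dm u *m v).
apply: leeD => //; rewrite lee_fin lerD2l ler_wpM2l // l0normE; apply: ler_sum => i _.
by rewrite DmE; case: (u01 i) => ->; rewrite ?mul0r ?eqxx ?mul1r ?lexx ?lern1 ?leq_b1.
Qed.

End Relaxation.

Section Rounding.
Context {R : realType} (n m r : nat) (f : 'cV[R]_n -> \bar R) (X : 'M[R]_(n, m))
  (U : 'M[R]_(n, r)) (s : 'rV[R]_r) (V : 'M[R]_(m, r))
  (gamma lambda : R) (vstar ustar : 'cV[R]_m) (tstar : \bar R).

Lemma utilde_binary (ub : 'cV[R]_m) i : utilde ub i 0 = 0 \/ utilde ub i 0 = 1.
Proof.
rewrite mxE /fracS; case: ifPn => [_|]; first by right.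
by rewrite negb_and !negbK => /orP[]/eqP; [left | right].
Qed.

Lemma wroundE (ub : 'cV[R]_m) : wround vstar ub = Dm ub *m vstar.
Proof.
apply/matrixP => i l; rewrite (ord1 l) !DmE !mxE.
by case: (fracS ub i); rewrite ?mul1r.
Qed.

Lemma sqnorm_wround_le (ub : 'cV[R]_m) : in01 ub ->
  sqnorm (wround vstar ub) <= \sum_i ub i 0 * vstar i 0 ^+ 2.
Proof.
move=> ub01; apply: ler_sum => i _; rewrite wroundE DmE exprMn.
have /andP[u0 u1] := ub01 i; rewrite ler_wpM2r ?sqr_ge0 // expr2; nra.
Qed.

Lemma sum_utilde_le (ub : 'cV[R]_m) : in01 ub ->
  \sum_i utilde ub i 0 <= \sum_i ub i 0 + #|[set i | fracS ub i]|%:R.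
Proof.
move=> ub01; rewrite -sum1dep_card natr_sum [X in _ + X]big_mkcond -big_split.
apply: ler_sum => i _; rewrite mxE; have /andP[u0 u1] := ub01 i.
by case: (fracS ub i) => /=; lra.
Qed.

Local Notation Kz := (SVt s V *m Dm vstar).
Local Notation z := (zstar s V vstar ustar).
Local Notation lp_cost u :=
  (\sum_i (u i 0 * (gamma / 2 * vstar i 0 ^+ 2) + lambda * u i 0)).

Lemma lp_eq_mxE : lp_eq_mx s V gamma lambda vstar =
  col_mx (\row_i (gamma / 2 * vstar i 0 ^+ 2 + lambda)) Kz.
Proof. by []. Qed.

Lemma lp_cost_mulE (u : 'cV[R]_m) :
  (\row_i (gamma / 2 * vstar i 0 ^+ 2 + lambda) *m u) 0 0 = lp_cost u.
Proof. by rewrite mxE; apply: eq_bigr => i _; rewrite !mxE; ring. Qed.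

Lemma lp_costE (u : 'cV[R]_m) :
  lp_cost u = gamma / 2 * \sum_i u i 0 * vstar i 0 ^+ 2 + lambda * \sum_i u i 0.
Proof.
rewrite big_split /= !mulr_sumr; congr (_ + _); apply: eq_bigr => i _; ring.
Qed.

Lemma Kz_mulE (u : 'cV[R]_m) : Kz *m u = \sum_i (u i 0 * vstar i 0) *: ell s V i.
Proof.
by rewrite -mulmxA mulmx_sum_col; apply: eq_bigr => i _; rewrite DmE mulrC.
Qed.

Lemma zstarE : z = Kz *m ustar.
Proof.
by rewrite Kz_mulE /zstar mulmx_sum_col; apply: eq_bigr => i _; rewrite DmE.
Qed.

Hypothesis f_neq_ninfty : forall x, f x != -oo%E.
Hypothesis X_svd : X = U *m diag_mx s *m V^T.
Hypothesis ustar01 : in01 ustar.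
Hypothesis tstar_def : (f (X *m (Dm ustar *m vstar)) +
  (gamma / 2 * (vstar^T *m Dm ustar *m vstar) 0 0 + lambda * \sum_i ustar i 0)%:E
  = tstar)%E.

Local Notation feasible := (lp_feasible f U s V gamma lambda vstar ustar tstar).
Local Notation Elp := (lp_eq_mx s V gamma lambda vstar).

Lemma X_mulE (w : 'cV[R]_m) : X *m w = U *m (SVt s V *m w).
Proof. by rewrite X_svd /SVt !mulmxA. Qed.

Lemma f_zstar_tstar : (f (U *m z) + (lp_cost ustar)%:E = tstar)%E.
Proof. by rewrite -tstar_def X_mulE lp_costE Dm_quadE. Qed.

(* When [f (U *m z)] is finite the objective constraint is the first row of
   [lp_eq_mx]; when it is [+oo] the constraint reads [+oo = +oo] and drops out. *)
Lemma lp_feasible_fin y (u : 'cV[R]_m) :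
  f (U *m z) = y%:E -> feasible u <-> box_feasible Elp (Elp *m ustar) u.
Proof.
move=> fz; rewrite /lp_feasible /box_feasible -f_zstar_tstar fz lp_eq_mxE.
rewrite !mul_col_mx -Kz_mulE zstarE; split.
  case=> cost_u Kz_u u01; split=> //; congr col_mx => //.
  apply/matrixP => i j; rewrite !ord1 !lp_cost_mulE.
  by move/eqP: cost_u; rewrite -!EFinD eqe => /eqP/addrI.
case=> u01 /eq_col_mx[cost_u Kz_u]; split=> //.
by have := congr1 (fun M : 'M[R]_1 => M 0 0) cost_u; rewrite /= !lp_cost_mulE => ->.
Qed.

Lemma lp_feasible_infty (u : 'cV[R]_m) :
  f (U *m z) = +oo%E -> feasible u <-> box_feasible Kz (Kz *m ustar) u.
Proof.
move=> fz; rewrite /lp_feasible /box_feasible -f_zstar_tstar fz !addye //.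
by rewrite -Kz_mulE zstarE; split=> [[]|[]].
Qed.

Lemma exists_lp_opt_bfs (c : 'cV[R]_m) :
  exists ub, lp_opt_bfs f U s V gamma lambda vstar ustar tstar c ub.
Proof.
case fz: (f (U *m z)) => [y| |]; last by have := f_neq_ninfty (U *m z); rewrite fz.
- have [u [[feas_u rkEA] opt_u]] := box_exists_opt_bfs c (conj ustar01 erefl
    : box_feasible Elp (Elp *m ustar) ustar).
  exists u; split; first by split=> //; apply/(lp_feasible_fin _ fz).
  by move=> v /(lp_feasible_fin _ fz); apply: opt_u.
- have [u [[feas_u rkKA] opt_u]] := box_exists_opt_bfs c (conj ustar01 erefl
    : box_feasible Kz (Kz *m ustar) ustar).
  exists u; split; first split.
  + exact/(lp_feasible_infty _ fz).
  + by rewrite lp_eq_mxE mxrank_col_mx_full_ext.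
  by move=> v /(lp_feasible_infty _ fz); apply: opt_u.
Qed.

Lemma X_wround (ub : 'cV[R]_m) : feasible ub -> X *m wround vstar ub = U *m z.
Proof.
case=> _ Kz_ub _; rewrite wroundE X_mulE.
have -> : Dm ub *m vstar = Dm vstar *m ub.
  by apply/matrixP => i l; rewrite (ord1 l) !DmE mulrC.
by rewrite [SVt s V *m _]mulmxA Kz_mulE Kz_ub.
Qed.

(* At most [1 + r] coordinates of a bfs are fractional, and rounding each of
   them up to 1 costs at most [lambda] while never increasing the quadratic term. *)
Lemma OPT_le_tstar (ub : 'cV[R]_m) : 0 <= gamma -> 0 <= lambda ->
  lp_bfs f U s V gamma lambda vstar ustar tstar ub ->
  (OPT f X gamma lambda vstar ub <= tstar + (lambda * (r + 1)%:R)%:E)%E.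
Proof.
move=> gamma_ge0 lambda_ge0 [feas_ub rkEA]; have [cost_ub _ ub01] := feas_ub.
rewrite /OPT X_wround //.
case fz: (f (U *m z)) => [y| |]; last by have := f_neq_ninfty (U *m z); rewrite fz.
  rewrite -cost_ub fz -!EFinD lee_fin -addrA lerD2l lp_costE.
  have frac_le : (#|[set i | fracS ub i]|%:R <= (r + 1)%:R :> R).
    by rewrite ler_nat addnC (card_frac_le rkEA).
  have := ler_wpM2l lambda_ge0 (le_trans (sum_utilde_le ub01) (lerD (lexx _) frac_le)).
  have := ler_wpM2l (divr_ge0 gamma_ge0 (ler0n _ 2)) (sqnorm_wround_le ub01).
  rewrite mulrDr; lra.
by rewrite -f_zstar_tstar fz addye ?leey.
Qed.

End Rounding.

Local Open Scope classical_set_scope.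

Theorem corollary3p1 (R : realType) (n m r : nat)
  (f : 'cV[R]_n -> \bar R) (X : 'M[R]_(n, m))
  (U : 'M[R]_(n, r)) (s : 'rV[R]_r) (V : 'M[R]_(m, r))
  (gamma lambda : R) (vstar ustar : 'cV[R]_m) (tstar : \bar R)
  (d : measure_display) (T : measurableType d) (P : probability T R)
  (c : 'I_m -> {RV P >-> R}) :
  (* f : R^n -> R \cup {+oo}, closed (lower semicontinuous) and convex *)
  (forall x, f x != -oo%E) ->
  lower_semicontinuous f ->
  convex_ext f ->
  (* rank r, compact SVD X = U_r Sigma_r V_r^T *)
  \rank X = r ->
  U^T *m U = 1%:M ->
  V^T *m V = 1%:M ->
  (forall i, 0 < s 0 i) ->
  (forall i j : 'I_r, (i <= j)%N -> s 0 j <= s 0 i) ->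
  X = U *m diag_mx s *m V^T ->
  0 < gamma -> 0 < lambda ->
  (* (v^*, u^* ) optimal for p^{**}_pen with optimal value t^* *)
  in01 ustar ->
  (f (X *m (Dm ustar *m vstar)) +
     (gamma / 2 * (vstar^T *m Dm ustar *m vstar) 0 0
      + lambda * \sum_i ustar i 0)%:E = tstar)%E ->
  pstar f X gamma lambda = tstar ->
  (* c ~ N(0, I_m): i.i.d. standard normal coordinates *)
  (forall i (B : set R), measurable B ->
     distribution P (c i) B = normal_prob 0 1 B) ->
  (forall B : 'I_m -> set R, (forall i, measurable (B i)) ->
     P (\bigcap_(i in [set: 'I_m]) (c i @^-1` B i)) =
     (\prod_(i < m) P (c i @^-1` B i))%E) ->
  {ae P, forall w : T,
    let cv : 'cV[R]_m := \col_i c i w in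
    (exists ub, lp_opt_bfs f U s V gamma lambda vstar ustar tstar cv ub) /\
    forall ub, lp_opt_bfs f U s V gamma lambda vstar ustar tstar cv ub ->
      [/\ (pstar f X gamma lambda <= ppen f X gamma lambda)%E,
          (ppen f X gamma lambda <= OPT f X gamma lambda vstar ub)%E
        & (OPT f X gamma lambda vstar ub <=
             pstar f X gamma lambda + (lambda * (r + 1)%:R)%:E)%E]}.
Proof.
move=> f_ninfty _ _ _ _ _ _ _ X_svd gamma_gt0 lambda_gt0 ustar01 tstar_def
  pstar_tstar _ _.
apply: aeW => w /=; split.
  exact: (exists_lp_opt_bfs f_ninfty X_svd ustar01 tstar_def).
move=> ub [bfs_ub _]; split.
- exact: pstar_le_ppen.
- by apply: ppen_le_binary; [exact: ltW | exact: utilde_binary].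
- by rewrite pstar_tstar
    (OPT_le_tstar f_ninfty X_svd tstar_def (ltW gamma_gt0) (ltW lambda_gt0) bfs_ub).
Qed.
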